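(* Let $\mathcal S$ be a complete separable metric space, $\mu$ a boundedly finite Borel measure on $\mathcal S$ and $a,\rho,k>0$. For a finite family of pairwise disjoint bounded Borel sets $A_1,\dots,A_l$ and nonnegative integers $n_1,\dots,n_l$ define $$P_l(A_1,\dots,A_l;n_1,\dots,n_l)=\frac{\rho_{(k\sum_{i=1}^l\mu(A_i))}\,a_{(\sum_{i=1}^l n_i)}}{(\rho+a)_{(k\sum_{i=1}^l\mu(A_i)+\sum_{i=1}^l n_i)}}\prod_{i=1}^l\frac{[k\mu(A_i)]_{(n_i)}}{n_i!}.$$ Then (I) for every permutation $i_1,\dots,i_l$ of $1,\dots,l$, $P_l(A_{i_1},\dots,A_{i_l};n_{i_1},\dots,n_{i_l})=P_l(A_1,\dots,A_l;n_1,\dots,n_l)$; and (II) for $l\ge2$, $\sum_{r=0}^\infty P_l(A_1,\dots,A_l;n_1,\dots,n_{l-1},r)=P_{l-1}(A_1,\dots,A_{l-1};n_1,\dots,n_{l-1})$.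
   Context: For $x>0$, $\beta\ge0$, $x_{(\beta)}=\Gamma(x+\beta)/\Gamma(x)$, with the convention $0_{(0)}=1$ and $0_{(n)}=0$ for integers $n\ge1$. *)

From Stdlib Require Import Reals Arith List Permutation ClassicalEpsilon.
Open Scope R_scope.

Definition gamma_seq (x : R) (n : nat) : R :=
  INR (fact n) * Rpower (INR n) x / prod_f_R0 (fun j => x + INR j) n.

Definition Gamma (x : R) : R :=
  epsilon (inhabits 0) (fun l => Un_cv (gamma_seq x) l).

(* Rising factorial x_(beta) = Gamma(x+beta)/Gamma(x),
   with convention 0_(0) = 1 and 0_(beta) = 0 for beta <> 0
   (only used with beta a positive integer). *)
Definition rising (x beta : R) : R :=
  if Req_EM_T x 0 then (if Req_EM_T beta 0 then 1 else 0)
  else Gamma (x + beta) / Gamma x.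

Definition sfamily (S : Type) := list ((S -> Prop) * nat).

Definition sum_mu {S : Type} (mu : (S -> Prop) -> R) (L : sfamily S) : R :=
  fold_right (fun p acc => mu (fst p) + acc) 0 L.

Definition sum_n {S : Type} (L : sfamily S) : R :=
  fold_right (fun p acc => INR (snd p) + acc) 0 L.

Definition prod_factor {S : Type} (mu : (S -> Prop) -> R) (k : R) (L : sfamily S) : R :=
  fold_right (fun p acc => rising (k * mu (fst p)) (INR (snd p)) / INR (fact (snd p)) * acc) 1 L.

Definition P {S : Type} (mu : (S -> Prop) -> R) (a rho k : R) (L : sfamily S) : R :=
  rising rho (k * sum_mu mu L) * rising a (sum_n L)
  / rising (rho + a) (k * sum_mu mu L + sum_n L)
  * prod_factor mu k L.

Definition disjoint {S : Type} (A B : S -> Prop) : Prop := forall x, ~ (A x /\ B x).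

Definition admissible {S : Type} (mu : (S -> Prop) -> R) (L : sfamily S) : Prop :=
  (forall p, In p L -> 0 <= mu (fst p)) /\
  ForallOrdPairs (fun p q => disjoint (fst p) (fst q)) L.

(* Part (I) holds because P depends on the family only through two sums and a
   product, all of which are invariant under permutation.  For part (II), put
   x = rho + k sum mu(A_i), y = a + sum n_i (i < l), m = k mu(A_l) and c = x + y + m.
   Since Gamma(z + r) = Gamma(z) (z)_r, the r-th summand is a constant multiple
   of (y)_r (m)_r / ((c)_r r!), so (II) is Gauss's summation
     2F1(y, m; c; 1) = Gamma(c) Gamma(c - y - m) / (Gamma(c - y) Gamma(c - m)).
   This follows from the contiguous relation
     c (c - y - m) F(c) = (c - y) (c - m) F(c + 1):
   iterating it n times gives F(c) as a product of Pochhammer ratios, which by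
   Euler's limit formula tends to the Gamma quotient, times F(c + n), which
   tends to 1. *)

From Coquelicot Require Import Coquelicot.
From Stdlib Require Import Reals Arith List Permutation Lra Lia ClassicalEpsilon.
Open Scope R_scope.

Fixpoint poch (z : R) (r : nat) : R :=
  match r with O => 1 | S r' => poch z r' * (z + INR r') end.

Lemma prod_f_R0_poch z n : prod_f_R0 (fun j => z + INR j) n = poch z (S n).
Proof. induction n as [|n IH]; simpl; [ring | now rewrite IH]. Qed.

Lemma poch_pos z r : 0 < z -> 0 < poch z r.
Proof.
  intro Hz; induction r as [|r IH]; simpl; [lra|].
  pose proof (pos_INR r); apply Rmult_lt_0_compat; lra.
Qed.

Lemma poch_nonneg z r : 0 <= z -> 0 <= poch z r.
Proof.
  intro Hz; induction r as [|r IH]; simpl; [lra|].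
  pose proof (pos_INR r); apply Rmult_le_pos; lra.
Qed.

Lemma poch_S_shift z r : poch z (S r) = z * poch (z + 1) r.
Proof.
  induction r as [|r IH]; [simpl; ring|].
  change (poch z (S (S r))) with (poch z (S r) * (z + INR (S r))).
  rewrite IH, S_INR; simpl; ring.
Qed.

Lemma poch_le_compat z w r : 0 < z <= w -> poch z r <= poch w r.
Proof.
  intro Hzw; induction r as [|r IH]; simpl; [lra|].
  pose proof (pos_INR r); pose proof (poch_nonneg z r).
  apply Rmult_le_compat; lra.
Qed.

Lemma poch_0_S r : poch 0 (S r) = 0.
Proof. rewrite poch_S_shift; ring. Qed.

Lemma INR_fact_pos n : 0 < INR (fact n).
Proof. apply lt_0_INR, lt_O_fact. Qed.

Lemma INR_fact_S n : INR (fact (S n)) = (INR n + 1) * INR (fact n).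
Proof. now rewrite fact_simpl, mult_INR, S_INR. Qed.

Lemma ln_1_plus_le h : 0 < h -> ln (1 + h) <= h.
Proof.
  intro Hh; rewrite <- (ln_exp h) at 2.
  apply ln_le; [lra | apply exp_ineq1_le].
Qed.

Lemma ln_1_plus_ge h : 0 < h -> h / (1 + h) <= ln (1 + h).
Proof.
  intro Hh; rewrite <- (ln_exp (h / (1 + h))).
  apply ln_le; [apply exp_pos|].
  pose proof (exp_ineq1_le (- (h / (1 + h)))) as Hlow.
  rewrite exp_Ropp in Hlow; pose proof (exp_pos (h / (1 + h))).
  replace (1 + - (h / (1 + h))) with (/ (1 + h)) in Hlow by (field; lra).
  apply Rinv_le_contravar in Hlow; [|apply Rinv_0_lt_compat; lra].
  now rewrite !Rinv_inv in Hlow.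
Qed.

Lemma exp_le_compat u v : u <= v -> exp u <= exp v.
Proof. intros [Huv | ->]; [left; now apply exp_increasing | lra]. Qed.

Lemma Rpower_pos a b : 0 < Rpower a b.
Proof. apply exp_pos. Qed.

Lemma Rpower_1_plus_inv_le x t : 0 < x <= 1 -> 0 < t -> Rpower (1 + / (t + 1)) x <= 1 + x / t.
Proof.
  intros Hx Ht; unfold Rpower; rewrite <- (exp_ln (1 + x / t)) by
    (assert (0 < x / t) by (apply Rdiv_lt_0_compat; lra); lra).
  apply exp_le_compat.
  pose proof (ln_1_plus_le (/ (t + 1)) ltac:(apply Rinv_0_lt_compat; lra)).
  pose proof (ln_1_plus_ge (x / t) ltac:(apply Rdiv_lt_0_compat; lra)).
  replace (x / t / (1 + x / t)) with (x / (t + x)) in * by (field; lra).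
  apply Rle_trans with (x * / (t + 1)); [apply Rmult_le_compat_l; lra|].
  apply Rle_trans with (x / (t + x)); [|lra].
  apply Rmult_le_compat_l, Rinv_le_contravar; lra.
Qed.

Lemma Rpower_1_plus_inv_ge x t : 0 < x -> 0 < t -> 1 + x / (t + 1) <= Rpower (1 + / t) x.
Proof.
  intros Hx Ht; unfold Rpower.
  eapply Rle_trans; [|apply exp_ineq1_le].
  pose proof (ln_1_plus_ge (/ t) ltac:(apply Rinv_0_lt_compat; lra)).
  replace (/ t / (1 + / t)) with (/ (t + 1)) in * by (field; lra).
  assert (x * / (t + 1) <= x * ln (1 + / t)) by (apply Rmult_le_compat_l; lra).
  unfold Rdiv; lra.
Qed.

Lemma is_lim_seq_eq u (l1 l2 : R) : is_lim_seq u l1 -> is_lim_seq u l2 -> l1 = l2.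
Proof.
  intros H1 H2; apply is_lim_seq_unique in H1, H2.
  rewrite H1 in H2; now injection H2.
Qed.

Lemma is_lim_seq_inv_INR_plus q : is_lim_seq (fun n => / (INR n + q)) 0.
Proof.
  replace (Finite 0) with (Rbar_inv p_infty) by reflexivity.
  apply is_lim_seq_inv; [|discriminate].
  eapply is_lim_seq_plus; [apply is_lim_seq_INR | apply is_lim_seq_const | constructor].
Qed.

Lemma is_lim_seq_INR_ratio p q : is_lim_seq (fun n => (INR n + p) / (INR n + q)) 1.
Proof.
  apply is_lim_seq_ext_loc with (fun n => 1 + (p - q) * / (INR n + q)).
  - destruct (proj2 (is_lim_seq_spec INR p_infty) is_lim_seq_INR (- q)) as [N HN].
    exists N; intros n Hn; specialize (HN n Hn); field; lra.
  - replace (Finite 1) with (Finite (1 + (p - q) * 0)) by (f_equal; ring).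
    apply is_lim_seq_plus'; [apply is_lim_seq_const|].
    apply (is_lim_seq_scal_l _ (p - q) 0), is_lim_seq_inv_INR_plus.
Qed.

Lemma is_lim_seq_Rpower_INR_neg x : 0 < x -> is_lim_seq (fun n => Rpower (INR n) (- x)) 0.
Proof.
  intro Hx; unfold Rpower.
  apply (is_lim_comp_seq exp _ m_infty 0); [apply is_lim_exp_m | now exists O |].
  assert (Hinf : Rbar_mult (- x) p_infty = m_infty)
    by (simpl; destruct (Rle_dec 0 (- x)); [exfalso; lra | reflexivity]).
  rewrite <- Hinf.
  apply is_lim_seq_scal_l, (is_lim_comp_seq ln INR p_infty p_infty);
    [apply is_lim_ln_p | now exists O | apply is_lim_seq_INR].
Qed.

Lemma is_lim_seq_shift_factor c : is_lim_seq (fun n => c / (c + INR n)) 0.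
Proof.
  apply is_lim_seq_ext with (fun n => c * / (INR n + c)); [intro n; unfold Rdiv; now rewrite Rplus_comm|].
  replace (Finite 0) with (Rbar_mult c 0) by (simpl; now rewrite Rmult_0_r).
  apply is_lim_seq_scal_l, is_lim_seq_inv_INR_plus.
Qed.

(** * Euler's limit for the Gamma function *)

Lemma gamma_seq_poch x n : gamma_seq x n = INR (fact n) * Rpower (INR n) x / poch x (S n).
Proof. unfold gamma_seq; now rewrite prod_f_R0_poch. Qed.

Lemma gamma_seq_pos x n : 0 < x -> 0 < gamma_seq x n.
Proof.
  intro Hx; rewrite gamma_seq_poch.
  apply Rdiv_lt_0_compat; [apply Rmult_lt_0_compat; [apply INR_fact_pos | apply Rpower_pos]|].
  now apply poch_pos.
Qed.

(* The offset 2 leaves the slack [Rpower_1_plus_inv_le] needs at each step. *)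
Lemma fact_Rpower_le_poch x n : 0 < x <= 1 ->
  INR (fact n) * Rpower (INR n + 2) x <= Rpower 2 x * poch (x + 1) n.
Proof.
  intro Hx; induction n as [|n IH]; [simpl; rewrite Rplus_0_l; lra|].
  pose proof (pos_INR n).
  assert (Hsplit : Rpower (INR (S n) + 2) x = Rpower (INR n + 2) x * Rpower (1 + / (INR n + 2)) x).
  { rewrite Rpower_mult_distr, S_INR by (try lra; pose proof (Rinv_0_lt_compat (INR n + 2)); lra).
    f_equal; field; lra. }
  assert (Hstep : (INR n + 1) * Rpower (1 + / (INR n + 2)) x <= x + 1 + INR n).
  { replace (INR n + 2) with (INR n + 1 + 1) by ring.
    apply Rle_trans with ((INR n + 1) * (1 + x / (INR n + 1))); [|right; field; lra].
    apply Rmult_le_compat_l; [lra | apply Rpower_1_plus_inv_le; lra]. }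
  rewrite Hsplit, INR_fact_S; simpl poch.
  apply Rle_trans with
    ((INR (fact n) * Rpower (INR n + 2) x) * ((INR n + 1) * Rpower (1 + / (INR n + 2)) x));
    [right; ring|].
  apply Rle_trans with ((Rpower 2 x * poch (x + 1) n) * (x + 1 + INR n)); [|right; ring].
  pose proof (INR_fact_pos n); pose proof (Rpower_pos (INR n + 2) x).
  pose proof (Rpower_pos (1 + / (INR n + 2)) x).
  apply Rmult_le_compat; [apply Rmult_le_pos | apply Rmult_le_pos | exact IH | lra]; lra.
Qed.

Lemma gamma_seq_S_le x n : 0 < x <= 1 -> gamma_seq x (S n) <= Rpower 2 x / x.
Proof.
  intro Hx; rewrite gamma_seq_poch, poch_S_shift.
  pose proof (fact_Rpower_le_poch x (S n) Hx) as Hprod.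
  pose proof (pos_INR (S n)); pose proof (INR_fact_pos (S n)).
  pose proof (poch_pos (x + 1) (S n) ltac:(lra)).
  assert (Rpower (INR (S n)) x <= Rpower (INR (S n) + 2) x)
    by (apply Rle_Rpower_l; [lra | split; [apply lt_0_INR; lia | lra]]).
  apply Rmult_le_reg_r with (x * poch (x + 1) (S n)); [apply Rmult_lt_0_compat; lra|].
  unfold Rdiv; rewrite Rmult_assoc, Rinv_l, Rmult_1_r by (apply Rgt_not_eq, Rmult_lt_0_compat; lra).
  replace (Rpower 2 x * / x * (x * poch (x + 1) (S n))) with (Rpower 2 x * poch (x + 1) (S n))
    by (field; lra).
  eapply Rle_trans; [|exact Hprod].
  apply Rmult_le_compat_l; [lra | assumption].
Qed.

Lemma gamma_seq_S_incr x n : 0 < x -> gamma_seq x (S n) <= gamma_seq x (S (S n)).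
Proof.
  intro Hx; set (t := INR (S n)).
  assert (Ht : 0 < t) by (apply lt_0_INR; lia).
  assert (Hratio : gamma_seq x (S (S n))
                   = gamma_seq x (S n) * ((t + 1) * Rpower (1 + / t) x / (x + t + 1))).
  { rewrite !gamma_seq_poch, (INR_fact_S (S n)), (S_INR (S n)); fold t.
    change (poch x (S (S (S n)))) with (poch x (S (S n)) * (x + INR (S (S n)))).
    rewrite (S_INR (S n)); fold t.
    replace (t + 1) with (t * (1 + / t)) at 2 by (field; lra).
    rewrite <- Rpower_mult_distr by (try lra; pose proof (Rinv_0_lt_compat t Ht); lra).
    pose proof (poch_pos x (S (S n)) Hx).
    field; lra. }
  rewrite Hratio; pose proof (gamma_seq_pos x (S n) Hx).
  rewrite <- (Rmult_1_r (gamma_seq x (S n))) at 1.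
  apply Rmult_le_compat_l; [lra|].
  pose proof (Rpower_1_plus_inv_ge x t Hx Ht).
  apply Rmult_le_reg_r with (x + t + 1); [lra|].
  unfold Rdiv; rewrite Rmult_assoc, Rinv_l, Rmult_1_r by lra.
  apply Rle_trans with ((t + 1) * (1 + x / (t + 1))); [right; field; lra|].
  apply Rmult_le_compat_l; lra.
Qed.

Lemma gamma_seq_cv_unit x : 0 < x <= 1 -> exists l, 0 < l /\ is_lim_seq (gamma_seq x) l.
Proof.
  intro Hx.
  assert (Hincr : forall n, gamma_seq x (S n) <= gamma_seq x (S (S n)))
    by (intro n; apply gamma_seq_S_incr; lra).
  assert (Hlim : ex_finite_lim_seq (fun n => gamma_seq x (S n)))
    by (apply ex_finite_lim_seq_incr with (Rpower 2 x / x); [exact Hincr | intro; now apply gamma_seq_S_le]).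
  apply Lim_seq_correct' in Hlim.
  exists (Lim_seq (fun n => gamma_seq x (S n))); split.
  - apply Rlt_le_trans with (gamma_seq x 1); [apply gamma_seq_pos; lra|].
    exact (is_lim_seq_incr_compare _ _ Hlim Hincr 0).
  - now apply is_lim_seq_incr_1.
Qed.

Lemma gamma_seq_succ x n : 0 < x ->
  gamma_seq (x + 1) (S n) = gamma_seq x (S n) * (x * ((INR n + 1) / (INR n + (x + 2)))).
Proof.
  intro Hx; rewrite !gamma_seq_poch, Rpower_plus, Rpower_1 by (apply lt_0_INR; lia).
  rewrite (poch_S_shift x (S n)).
  change (poch (x + 1) (S (S n))) with (poch (x + 1) (S n) * (x + 1 + INR (S n))).
  pose proof (poch_pos (x + 1) (S n) ltac:(lra)); pose proof (pos_INR n).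
  rewrite S_INR; field; lra.
Qed.

Lemma gamma_seq_succ_cv x (l : R) : 0 < x ->
  is_lim_seq (gamma_seq x) l -> is_lim_seq (gamma_seq (x + 1)) (x * l).
Proof.
  intros Hx Hl; apply is_lim_seq_incr_1.
  apply is_lim_seq_ext with (fun n => gamma_seq x (S n) * (x * ((INR n + 1) / (INR n + (x + 2))))).
  { intro n; symmetry; now apply gamma_seq_succ. }
  replace (x * l) with (l * (x * 1)) by ring.
  apply is_lim_seq_mult'; [now apply -> is_lim_seq_incr_1|].
  apply (is_lim_seq_scal_l _ x 1), is_lim_seq_INR_ratio.
Qed.

Lemma gamma_seq_cv x : 0 < x -> exists l, 0 < l /\ is_lim_seq (gamma_seq x) l.
Proof.
  intro Hx; destruct (proj2 (is_lim_seq_spec INR p_infty) is_lim_seq_INR x) as [N HN].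
  specialize (HN N (Nat.le_refl N)); revert x Hx HN.
  induction N as [|N IH]; intros x Hx HN; [simpl in HN; lra|].
  destruct (Rle_lt_dec x 1) as [Hle | Hgt]; [apply gamma_seq_cv_unit; lra|].
  rewrite S_INR in HN.
  destruct (IH (x - 1) ltac:(lra) ltac:(lra)) as [l [Hl Hcv]].
  exists ((x - 1) * l); split; [apply Rmult_lt_0_compat; lra|].
  replace x with (x - 1 + 1) at 1 by ring.
  now apply gamma_seq_succ_cv; [lra|].
Qed.

Lemma Gamma_cv x : 0 < x -> is_lim_seq (gamma_seq x) (Gamma x).
Proof.
  intro Hx; destruct (gamma_seq_cv x Hx) as [l [_ Hl]].
  apply is_lim_seq_Reals, (epsilon_spec (inhabits 0) (fun l => Un_cv (gamma_seq x) l)).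
  exists l; now apply is_lim_seq_Reals.
Qed.

Lemma Gamma_eq_lim x (l : R) : 0 < x -> is_lim_seq (gamma_seq x) l -> Gamma x = l.
Proof. intro Hx; now apply is_lim_seq_eq, Gamma_cv. Qed.

Lemma Gamma_pos x : 0 < x -> 0 < Gamma x.
Proof.
  intro Hx; destruct (gamma_seq_cv x Hx) as [l [Hl Hcv]].
  now rewrite (Gamma_eq_lim x l Hx Hcv).
Qed.

Lemma Gamma_succ x : 0 < x -> Gamma (x + 1) = x * Gamma x.
Proof. intro Hx; apply Gamma_eq_lim; [lra | now apply gamma_seq_succ_cv, Gamma_cv]. Qed.

Lemma Gamma_plus_INR x r : 0 < x -> Gamma (x + INR r) = Gamma x * poch x r.
Proof.
  intro Hx; induction r as [|r IH]; [simpl; rewrite Rplus_0_r; ring|].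
  pose proof (pos_INR r).
  rewrite S_INR, <- Rplus_assoc, Gamma_succ, IH by lra; simpl; ring.
Qed.

Lemma rising_Gamma z b : 0 < z -> rising z b = Gamma (z + b) / Gamma z.
Proof. intro Hz; unfold rising; destruct (Req_EM_T z 0); [lra | reflexivity]. Qed.

Lemma rising_INR z r : 0 <= z -> rising z (INR r) = poch z r.
Proof.
  intro Hz; unfold rising.
  destruct (Req_EM_T z 0) as [-> | Hz0].
  - destruct r as [|r]; [simpl; destruct (Req_EM_T 0 0); lra|].
    rewrite poch_0_S; destruct (Req_EM_T (INR (S r)) 0) as [H0 | _]; [|reflexivity].
    pose proof (lt_0_INR (S r) ltac:(lia)); lra.
  - pose proof (Gamma_pos z ltac:(lra)).
    rewrite Gamma_plus_INR by lra; field; lra.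
Qed.

(** * Gauss's summation theorem *)

Definition gauss_term (y m c : R) (r : nat) : R :=
  poch y r * poch m r / (poch c r * INR (fact r)).

Definition gauss_sum (y m c : R) (N : nat) : R := sum_f_R0 (gauss_term y m c) N.

(* The product of the contiguity factors (c'-y)(c'-m)/(c'(c'-y-m)) for c' = c, ..., c+n-1. *)
Definition gauss_ratio (y m c : R) (n : nat) : R :=
  poch (c - y) n * poch (c - m) n / (poch c n * poch (c - y - m) n).

Section Gauss.

Variables y m : R.
Hypothesis Hy : 0 < y.
Hypothesis Hm : 0 < m.

Lemma gauss_term_0 c : gauss_term y m c 0 = 1.
Proof. unfold gauss_term; simpl; field. Qed.

Lemma gauss_term_pos c r : 0 < c -> 0 < gauss_term y m c r.
Proof.
  intro Hc; unfold gauss_term; pose proof (INR_fact_pos r).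
  pose proof (poch_pos y r Hy); pose proof (poch_pos m r Hm); pose proof (poch_pos c r Hc).
  apply Rdiv_lt_0_compat; apply Rmult_lt_0_compat; lra.
Qed.

Lemma gauss_term_S c r : 0 < c ->
  gauss_term y m c (S r)
  = gauss_term y m c r * ((y + INR r) * (m + INR r) / ((c + INR r) * (INR r + 1))).
Proof.
  intro Hc; unfold gauss_term; simpl poch; rewrite INR_fact_S.
  pose proof (poch_pos c r Hc); pose proof (INR_fact_pos r); pose proof (pos_INR r).
  field; repeat split; lra.
Qed.

Lemma gauss_term_succ_c c r : 0 < c ->
  gauss_term y m (c + 1) r = gauss_term y m c r * (c / (c + INR r)).
Proof.
  intro Hc; unfold gauss_term.
  assert (Hshift : poch c r * (c + INR r) = c * poch (c + 1) r)
    by (rewrite <- poch_S_shift; reflexivity).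
  pose proof (poch_pos c r Hc); pose proof (poch_pos (c + 1) r ltac:(lra)).
  pose proof (INR_fact_pos r); pose proof (pos_INR r).
  apply Rmult_eq_reg_r with (c * poch (c + 1) r * INR (fact r) * (c + INR r));
    [|apply Rgt_not_eq; repeat apply Rmult_lt_0_compat; lra].
  rewrite <- Hshift at 2; field; repeat split; lra.
Qed.

Lemma gauss_term_S_shift_le c n r : 0 < c ->
  gauss_term y m (c + INR n) (S r) <= c / (c + INR n) * gauss_term y m c (S r).
Proof.
  intro Hc; unfold gauss_term; pose proof (pos_INR n).
  rewrite (poch_S_shift c r), (poch_S_shift (c + INR n) r).
  pose proof (poch_le_compat (c + 1) (c + INR n + 1) r ltac:(lra)).
  pose proof (poch_pos (c + 1) r ltac:(lra)); pose proof (INR_fact_pos (S r)).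
  pose proof (poch_pos y (S r) Hy); pose proof (poch_pos m (S r) Hm).
  set (A := poch y (S r) * poch m (S r)); assert (0 < A) by (unfold A; nra).
  apply Rle_trans with (A / ((c + INR n) * poch (c + 1) r * INR (fact (S r)))).
  - apply Rmult_le_compat_l; [lra|].
    apply Rinv_le_contravar; [repeat apply Rmult_lt_0_compat; lra|].
    apply Rmult_le_compat_r; [lra | apply Rmult_le_compat_l; lra].
  - right; field; repeat split; lra.
Qed.

Lemma gauss_sum_contiguous c N : 0 < c ->
  c * (c - y - m) * gauss_sum y m c N + c * (INR N + 1) * gauss_term y m c (S N)
  = (c - y) * (c - m) * gauss_sum y m (c + 1) N.
Proof.
  intro Hc; unfold gauss_sum; induction N as [|N IH].
  - simpl; rewrite gauss_term_S, !gauss_term_0 by lra; simpl; field; lra.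
  - simpl sum_f_R0; rewrite (gauss_term_succ_c c (S N)), (gauss_term_S c (S N)) by lra.
    pose proof (pos_INR N); rewrite S_INR in *.
    rewrite (Rmult_plus_distr_l ((c - y) * (c - m))), <- IH; field; lra.
Qed.

Lemma gauss_sum_ge_1 c N : 0 < c -> 1 <= gauss_sum y m c N.
Proof.
  intro Hc; unfold gauss_sum; induction N as [|N IH]; simpl.
  - rewrite gauss_term_0; lra.
  - pose proof (gauss_term_pos c (S N) Hc); lra.
Qed.

Lemma gauss_sum_shift_sub_1 c n N : 0 < c ->
  gauss_sum y m (c + INR n) N - 1 <= c / (c + INR n) * (gauss_sum y m c N - 1).
Proof.
  intro Hc; pose proof (pos_INR n); unfold gauss_sum; induction N as [|N IH]; simpl.
  - rewrite !gauss_term_0; right; field; lra.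
  - pose proof (gauss_term_S_shift_le c n N Hc).
    replace (c / (c + INR n) * (sum_f_R0 (gauss_term y m c) N + gauss_term y m c (S N) - 1))
      with (c / (c + INR n) * (sum_f_R0 (gauss_term y m c) N - 1)
            + c / (c + INR n) * gauss_term y m c (S N)) by ring.
    lra.
Qed.

Lemma gauss_ratio_0 c : gauss_ratio y m c 0 = 1.
Proof. unfold gauss_ratio; simpl; field. Qed.

Lemma gauss_ratio_1 c : gauss_ratio y m c 1 = (c - y) * (c - m) / (c * (c - y - m)).
Proof. unfold gauss_ratio; simpl; rewrite !Rplus_0_r, !Rmult_1_l; reflexivity. Qed.

Lemma gauss_ratio_pos c n : 0 < c - y - m -> 0 < gauss_ratio y m c n.
Proof.
  intro Hx; unfold gauss_ratio.
  pose proof (poch_pos (c - y) n ltac:(lra)); pose proof (poch_pos (c - m) n ltac:(lra)).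
  pose proof (poch_pos c n ltac:(lra)); pose proof (poch_pos (c - y - m) n ltac:(lra)).
  apply Rdiv_lt_0_compat; apply Rmult_lt_0_compat; lra.
Qed.

Lemma gauss_ratio_S c n : 0 < c - y - m ->
  gauss_ratio y m c (S n) = gauss_ratio y m c n * gauss_ratio y m (c + INR n) 1.
Proof.
  intro Hx; rewrite gauss_ratio_1; unfold gauss_ratio; simpl poch.
  pose proof (pos_INR n).
  pose proof (poch_pos c n ltac:(lra)); pose proof (poch_pos (c - y - m) n ltac:(lra)).
  field; repeat split; lra.
Qed.

Lemma gauss_sum_le_succ c N : 0 < c - y - m ->
  gauss_sum y m c N <= gauss_ratio y m c 1 * gauss_sum y m (c + 1) N.
Proof.
  intro Hx; rewrite gauss_ratio_1.
  pose proof (gauss_sum_contiguous c N ltac:(lra)).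
  pose proof (gauss_term_pos c (S N) ltac:(lra)); pose proof (pos_INR N).
  apply Rmult_le_reg_l with (c * (c - y - m)); [apply Rmult_lt_0_compat; lra|].
  replace (c * (c - y - m) * ((c - y) * (c - m) / (c * (c - y - m)) * gauss_sum y m (c + 1) N))
    with ((c - y) * (c - m) * gauss_sum y m (c + 1) N) by (field; lra).
  assert (0 <= c * (INR N + 1) * gauss_term y m c (S N)) by (apply Rmult_le_pos; nra).
  lra.
Qed.

Lemma gauss_sum_le_ratio c n N : 0 < c - y - m ->
  gauss_sum y m c N <= gauss_ratio y m c n * gauss_sum y m (c + INR n) N.
Proof.
  intro Hx; induction n as [|n IH].
  - rewrite gauss_ratio_0; simpl; rewrite Rplus_0_r; lra.
  - pose proof (pos_INR n).
    pose proof (gauss_sum_le_succ (c + INR n) N ltac:(lra)).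
    rewrite gauss_ratio_S, S_INR, <- Rplus_assoc by lra.
    pose proof (gauss_ratio_pos c n Hx).
    eapply Rle_trans; [exact IH|]; rewrite Rmult_assoc.
    apply Rmult_le_compat_l; lra.
Qed.

Lemma gauss_ratio_S_gamma_seq c n : 0 < c - y - m ->
  gauss_ratio y m c (S n)
  = gamma_seq c n * gamma_seq (c - y - m) n / (gamma_seq (c - y) n * gamma_seq (c - m) n).
Proof.
  intro Hx; unfold gauss_ratio; rewrite !gamma_seq_poch.
  replace (Rpower (INR n) c)
    with (Rpower (INR n) (c - y - m) * Rpower (INR n) y * Rpower (INR n) m)
    by (rewrite <- !Rpower_plus; f_equal; ring).
  replace (Rpower (INR n) (c - y)) with (Rpower (INR n) (c - y - m) * Rpower (INR n) m)
    by (rewrite <- !Rpower_plus; f_equal; ring).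
  replace (Rpower (INR n) (c - m)) with (Rpower (INR n) (c - y - m) * Rpower (INR n) y)
    by (rewrite <- !Rpower_plus; f_equal; ring).
  pose proof (poch_pos c (S n) ltac:(lra)); pose proof (poch_pos (c - y - m) (S n) Hx).
  pose proof (poch_pos (c - y) (S n) ltac:(lra)); pose proof (poch_pos (c - m) (S n) ltac:(lra)).
  pose proof (INR_fact_pos n); pose proof (Rpower_pos (INR n) (c - y - m)).
  pose proof (Rpower_pos (INR n) y); pose proof (Rpower_pos (INR n) m).
  field; repeat split; lra.
Qed.

Lemma gauss_term_S_gamma_seq c N : 0 < c ->
  (INR N + 1) * gauss_term y m c (S N)
  = Rpower (INR N) (- (c - y - m)) * gamma_seq c N / (gamma_seq y N * gamma_seq m N).
Proof.
  intro Hc; unfold gauss_term; rewrite !gamma_seq_poch, INR_fact_S.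
  replace (Rpower (INR N) c)
    with (Rpower (INR N) (c - y - m) * Rpower (INR N) y * Rpower (INR N) m)
    by (rewrite <- !Rpower_plus; f_equal; ring).
  rewrite Rpower_Ropp.
  pose proof (poch_pos c (S N) Hc); pose proof (poch_pos y (S N) Hy).
  pose proof (poch_pos m (S N) Hm); pose proof (pos_INR N).
  pose proof (INR_fact_pos N); pose proof (Rpower_pos (INR N) (c - y - m)).
  pose proof (Rpower_pos (INR N) y); pose proof (Rpower_pos (INR N) m).
  field; repeat split; lra.
Qed.

Lemma gauss_ratio_cv c : 0 < c - y - m ->
  is_lim_seq (gauss_ratio y m c) (Gamma c * Gamma (c - y - m) / (Gamma (c - y) * Gamma (c - m))).
Proof.
  intro Hx; apply is_lim_seq_incr_1.
  apply is_lim_seq_ext with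
    (fun n => gamma_seq c n * gamma_seq (c - y - m) n / (gamma_seq (c - y) n * gamma_seq (c - m) n)).
  { intro n; symmetry; now apply gauss_ratio_S_gamma_seq. }
  pose proof (Gamma_pos (c - y) ltac:(lra)); pose proof (Gamma_pos (c - m) ltac:(lra)).
  apply is_lim_seq_div'; [| | apply Rgt_not_eq, Rmult_lt_0_compat; lra];
    apply is_lim_seq_mult'; apply Gamma_cv; lra.
Qed.

Lemma gauss_term_S_cv c : 0 < c - y - m ->
  is_lim_seq (fun N => (INR N + 1) * gauss_term y m c (S N)) 0.
Proof.
  intro Hx.
  apply is_lim_seq_ext with
    (fun N => Rpower (INR N) (- (c - y - m)) * gamma_seq c N / (gamma_seq y N * gamma_seq m N)).
  { intro N; symmetry; apply gauss_term_S_gamma_seq; lra. }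
  pose proof (Gamma_pos y Hy); pose proof (Gamma_pos m Hm).
  replace (Finite 0) with (Finite (0 * Gamma c / (Gamma y * Gamma m))) by (f_equal; field; lra).
  apply is_lim_seq_div'; [| | apply Rgt_not_eq, Rmult_lt_0_compat; lra].
  - apply is_lim_seq_mult'; [now apply is_lim_seq_Rpower_INR_neg | apply Gamma_cv; lra].
  - apply is_lim_seq_mult'; now apply Gamma_cv.
Qed.

Lemma gauss_sum_bounded c : 0 < c - y - m -> exists B, forall N, gauss_sum y m c N <= B.
Proof.
  intro Hx.
  assert (Hsmall : is_lim_seq (fun n => gauss_ratio y m c n * (c / (c + INR n))) 0).
  { replace (Finite 0)
      with (Finite (Gamma c * Gamma (c - y - m) / (Gamma (c - y) * Gamma (c - m)) * 0))
      by (f_equal; ring).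
    apply is_lim_seq_mult'; [now apply gauss_ratio_cv | apply is_lim_seq_shift_factor]. }
  (* With P (c/(c+n)) <= 1/2, the bounds S <= P S(c+n) and S(c+n) - 1 <= (c/(c+n)) (S - 1)
     give S <= P + (S - 1)/2. *)
  apply is_lim_seq_spec in Hsmall.
  destruct (Hsmall (mkposreal (1 / 2) ltac:(lra))) as [n Hn]; specialize (Hn n (le_n n)).
  simpl in Hn; rewrite Rminus_0_r in Hn; apply Rabs_def2 in Hn.
  exists (2 * gauss_ratio y m c n); intro N.
  pose proof (gauss_sum_le_ratio c n N Hx); pose proof (gauss_sum_shift_sub_1 c n N ltac:(lra)).
  pose proof (gauss_sum_ge_1 c N ltac:(lra)); pose proof (gauss_ratio_pos c n Hx).
  set (S0 := gauss_sum y m c N) in *; set (Sn := gauss_sum y m (c + INR n) N) in *.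
  set (P := gauss_ratio y m c n) in *; set (e := c / (c + INR n)) in *.
  assert (P * Sn <= P + P * e * (S0 - 1)) by nra.
  nra.
Qed.

(* Meaningful only where the series converges, see [gauss_sum_cv_value]. *)
Definition gauss_value (c : R) : R := real (Lim_seq (gauss_sum y m c)).

Lemma gauss_sum_cv_value c : 0 < c - y - m -> is_lim_seq (gauss_sum y m c) (gauss_value c).
Proof.
  intro Hx; destruct (gauss_sum_bounded c Hx) as [B HB].
  apply Lim_seq_correct', ex_finite_lim_seq_incr with B; [|exact HB].
  intro N; unfold gauss_sum; simpl.
  pose proof (gauss_term_pos c (S N) ltac:(lra)); lra.
Qed.

Lemma gauss_value_ge_1 c : 0 < c - y - m -> 1 <= gauss_value c.
Proof.
  intro Hx.
  exact (is_lim_seq_le (fun _ => 1) _ 1 _ (fun N => gauss_sum_ge_1 c N ltac:(lra))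
           (is_lim_seq_const 1) (gauss_sum_cv_value c Hx)).
Qed.

Lemma gauss_value_succ c : 0 < c - y - m ->
  gauss_value c = gauss_ratio y m c 1 * gauss_value (c + 1).
Proof.
  intro Hx; rewrite gauss_ratio_1.
  assert (Hlim : c * (c - y - m) * gauss_value c + c * 0 = (c - y) * (c - m) * gauss_value (c + 1)).
  { apply (is_lim_seq_eq (fun N => (c - y) * (c - m) * gauss_sum y m (c + 1) N)).
    - apply is_lim_seq_ext with
        (fun N => c * (c - y - m) * gauss_sum y m c N + c * ((INR N + 1) * gauss_term y m c (S N))).
      { intro N; rewrite <- gauss_sum_contiguous by lra; ring. }
      apply is_lim_seq_plus'; apply (is_lim_seq_scal_l _ _ (Finite _));
        [now apply gauss_sum_cv_value | now apply gauss_term_S_cv].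
    - apply (is_lim_seq_scal_l _ _ (Finite _)), gauss_sum_cv_value; lra. }
  apply Rmult_eq_reg_l with (c * (c - y - m)); [|apply Rgt_not_eq, Rmult_lt_0_compat; lra].
  rewrite Rmult_0_r, Rplus_0_r in Hlim; rewrite Hlim; field; lra.
Qed.

Lemma gauss_value_ratio c n : 0 < c - y - m ->
  gauss_value c = gauss_ratio y m c n * gauss_value (c + INR n).
Proof.
  intro Hx; induction n as [|n IH].
  - rewrite gauss_ratio_0; simpl; rewrite Rplus_0_r; ring.
  - pose proof (pos_INR n).
    rewrite IH, gauss_ratio_S, S_INR, <- Rplus_assoc, (gauss_value_succ (c + INR n)) by lra.
    ring.
Qed.

Lemma gauss_value_shift_cv c : 0 < c - y - m -> is_lim_seq (fun n => gauss_value (c + INR n)) 1.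
Proof.
  intro Hx.
  apply is_lim_seq_le_le with (fun _ => 1) (fun n => 1 + c / (c + INR n) * (gauss_value c - 1)).
  - intro n; pose proof (pos_INR n); split; [apply gauss_value_ge_1; lra|].
    assert (Hle := is_lim_seq_le _ _ _ _ (fun N => gauss_sum_shift_sub_1 c n N ltac:(lra))
             (is_lim_seq_minus' _ _ _ 1 (gauss_sum_cv_value (c + INR n) ltac:(lra)) (is_lim_seq_const 1))
             (is_lim_seq_scal_l _ (c / (c + INR n)) (gauss_value c - 1)
                (is_lim_seq_minus' _ _ _ 1 (gauss_sum_cv_value c Hx) (is_lim_seq_const 1)))).
    simpl in Hle; lra.
  - apply is_lim_seq_const.
  - replace (Finite 1) with (Finite (1 + 0 * (gauss_value c - 1))) by (f_equal; ring).
    apply is_lim_seq_plus'; [apply is_lim_seq_const|].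
    exact (is_lim_seq_scal_r _ (gauss_value c - 1) 0 (is_lim_seq_shift_factor c)).
Qed.

Theorem gauss_summation c : 0 < c - y - m ->
  is_lim_seq (gauss_sum y m c) (Gamma c * Gamma (c - y - m) / (Gamma (c - y) * Gamma (c - m))).
Proof.
  intro Hx; replace (Gamma c * Gamma (c - y - m) / (Gamma (c - y) * Gamma (c - m)))
    with (gauss_value c); [now apply gauss_sum_cv_value|].
  apply (is_lim_seq_eq (fun n => gauss_ratio y m c n * gauss_value (c + INR n))).
  - apply is_lim_seq_ext with (fun _ => gauss_value c); [intro; now apply gauss_value_ratio|].
    apply is_lim_seq_const.
  - rewrite <- (Rmult_1_r (_ / _)).
    apply is_lim_seq_mult'; [now apply gauss_ratio_cv | now apply gauss_value_shift_cv].
Qed.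

End Gauss.

Lemma gauss_sum_0_r y c N : gauss_sum y 0 c N = 1.
Proof.
  unfold gauss_sum; induction N as [|N IH]; simpl; [apply gauss_term_0|].
  rewrite IH; unfold gauss_term; rewrite poch_0_S; unfold Rdiv; ring.
Qed.

Lemma gauss_summation_nonneg y m c : 0 < y -> 0 <= m -> 0 < c - y - m ->
  is_lim_seq (gauss_sum y m c) (Gamma c * Gamma (c - y - m) / (Gamma (c - y) * Gamma (c - m))).
Proof.
  intros Hy [Hm | <-] Hx; [now apply gauss_summation|].
  rewrite !Rminus_0_r; pose proof (Gamma_pos c ltac:(lra)); pose proof (Gamma_pos (c - y) ltac:(lra)).
  replace (Gamma c * Gamma (c - y) / (Gamma (c - y) * Gamma c)) with 1 by (field; lra).
  apply is_lim_seq_ext with (fun _ => 1); [intro; symmetry; apply gauss_sum_0_r|].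
  apply is_lim_seq_const.
Qed.

Lemma rising_series rho a X Y m : 0 < rho -> 0 < a -> 0 <= X -> 0 <= Y -> 0 <= m ->
  infinite_sum
    (fun r => rising rho (X + m) * rising a (Y + INR r) / rising (rho + a) (X + m + (Y + INR r))
              * (rising m (INR r) / INR (fact r)))
    (rising rho X * rising a Y / rising (rho + a) (X + Y)).
Proof.
  intros Hrho Ha HX HY Hm.
  set (x := rho + X); set (y := a + Y); set (c := x + y + m).
  pose proof (Gamma_pos rho Hrho); pose proof (Gamma_pos a Ha); pose proof (Gamma_pos (rho + a) ltac:(lra)).
  pose proof (Gamma_pos x ltac:(unfold x; lra)); pose proof (Gamma_pos y ltac:(unfold y; lra)).
  pose proof (Gamma_pos (x + m) ltac:(unfold x; lra)); pose proof (Gamma_pos (x + y) ltac:(unfold x, y; lra)).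
  pose proof (Gamma_pos c ltac:(unfold c, x, y; lra)).
  set (K := Gamma (x + m) * Gamma y * Gamma (rho + a) / (Gamma rho * Gamma a * Gamma c)).
  assert (Hterm : forall r,
    rising rho (X + m) * rising a (Y + INR r) / rising (rho + a) (X + m + (Y + INR r))
    * (rising m (INR r) / INR (fact r)) = K * gauss_term y m c r).
  { intro r; rewrite rising_INR, !rising_Gamma by lra.
    replace (rho + (X + m)) with (x + m) by (unfold x; ring).
    replace (a + (Y + INR r)) with (y + INR r) by (unfold y; ring).
    replace (rho + a + (X + m + (Y + INR r))) with (c + INR r) by (unfold c, x, y; ring).
    rewrite !Gamma_plus_INR by (unfold c, x, y; lra).
    unfold K, gauss_term.
    pose proof (poch_pos y r ltac:(unfold y; lra)); pose proof (poch_pos c r ltac:(unfold c, x, y; lra)).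
    pose proof (INR_fact_pos r).
    field; repeat split; lra. }
  apply is_lim_seq_Reals.
  apply is_lim_seq_ext with (fun N => K * gauss_sum y m c N).
  { intro N; unfold gauss_sum; rewrite scal_sum; apply sum_eq; intros r _; rewrite Hterm; ring. }
  replace (rising rho X * rising a Y / rising (rho + a) (X + Y))
    with (K * (Gamma c * Gamma (c - y - m) / (Gamma (c - y) * Gamma (c - m)))).
  - apply (is_lim_seq_scal_l _ _ (Finite _)), gauss_summation_nonneg;
      unfold c, x, y in *; lra.
  - replace (c - y - m) with x by (unfold c; ring); replace (c - y) with (x + m) by (unfold c; ring).
    replace (c - m) with (x + y) by (unfold c; ring).
    rewrite !rising_Gamma by lra.
    replace (rho + a + (X + Y)) with (x + y) by (unfold x, y; ring).
    fold x y; unfold K; field; repeat split; lra.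
Qed.

(** * The family [P] *)

Lemma fold_right_Permutation {A B : Type} (f : A -> B -> B) (z : B) (L L' : list A) :
  Permutation L L' -> (forall p q acc, f p (f q acc) = f q (f p acc)) ->
  fold_right f z L = fold_right f z L'.
Proof. intros HLL' Hcomm; induction HLL'; simpl; congruence. Qed.

Lemma P_Permutation {S : Type} (mu : (S -> Prop) -> R) a rho k (L L' : sfamily S) :
  Permutation L L' -> P mu a rho k L' = P mu a rho k L.
Proof.
  intro HLL'; unfold P, sum_mu, sum_n, prod_factor.
  rewrite !(fold_right_Permutation _ _ L L' HLL') by (intros; ring).
  reflexivity.
Qed.

Lemma sum_mu_snoc {S : Type} (mu : (S -> Prop) -> R) (L : sfamily S) A r :
  sum_mu mu (L ++ (A, r) :: nil) = sum_mu mu L + mu A.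
Proof. unfold sum_mu; induction L as [|p L IH]; simpl; [ring | rewrite IH; ring]. Qed.

Lemma sum_n_snoc {S : Type} (L : sfamily S) A r : sum_n (L ++ (A, r) :: nil) = sum_n L + INR r.
Proof. unfold sum_n; induction L as [|p L IH]; simpl; [ring | rewrite IH; ring]. Qed.

Lemma prod_factor_snoc {S : Type} (mu : (S -> Prop) -> R) k (L : sfamily S) A r :
  prod_factor mu k (L ++ (A, r) :: nil)
  = prod_factor mu k L * (rising (k * mu A) (INR r) / INR (fact r)).
Proof. unfold prod_factor; induction L as [|p L IH]; simpl; [ring | rewrite IH; ring]. Qed.

Lemma sum_mu_nonneg {S : Type} (mu : (S -> Prop) -> R) (L : sfamily S) :
  (forall p, In p L -> 0 <= mu (fst p)) -> 0 <= sum_mu mu L.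
Proof.
  unfold sum_mu; induction L as [|p L IH]; intro Hpos; simpl; [lra|].
  pose proof (Hpos p (or_introl eq_refl)); pose proof (IH (fun q Hq => Hpos q (or_intror Hq))); lra.
Qed.

Lemma sum_n_nonneg {S : Type} (L : sfamily S) : 0 <= sum_n L.
Proof.
  unfold sum_n; induction L as [|p L IH]; simpl; [lra|].
  pose proof (pos_INR (snd p)); lra.
Qed.

Lemma P_snoc {S : Type} (mu : (S -> Prop) -> R) a rho k (L : sfamily S) A r :
  P mu a rho k (L ++ (A, r) :: nil)
  = rising rho (k * sum_mu mu L + k * mu A) * rising a (sum_n L + INR r)
    / rising (rho + a) (k * sum_mu mu L + k * mu A + (sum_n L + INR r))
    * (rising (k * mu A) (INR r) / INR (fact r)) * prod_factor mu k L.
Proof.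
  unfold P; rewrite sum_mu_snoc, sum_n_snoc, prod_factor_snoc, Rmult_plus_distr_l; ring.
Qed.

Lemma P_snoc_infinite_sum {S : Type} (mu : (S -> Prop) -> R) a rho k (L : sfamily S) A :
  0 < a -> 0 < rho -> 0 <= k -> 0 <= sum_mu mu L -> 0 <= mu A ->
  infinite_sum (fun r => P mu a rho k (L ++ (A, r) :: nil)) (P mu a rho k L).
Proof.
  intros Ha Hrho Hk HL HA.
  assert (Hseries := rising_series rho a (k * sum_mu mu L) (sum_n L) (k * mu A) Hrho Ha
                       ltac:(nra) (sum_n_nonneg L) ltac:(nra)).
  apply is_lim_seq_Reals in Hseries.
  apply is_lim_seq_Reals;
    eapply is_lim_seq_ext; [|exact (is_lim_seq_scal_r _ (prod_factor mu k L) _ Hseries)].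
  intro N; cbv beta; rewrite (Rmult_comm (sum_f_R0 _ N)), scal_sum; apply sum_eq; intros r _; now rewrite P_snoc.
Qed.

Theorem theorem4 (S : Type) (mu : (S -> Prop) -> R) (a rho k : R) :
  0 < a -> 0 < rho -> 0 < k ->
  (forall L L' : sfamily S, admissible mu L -> Permutation L L' ->
     P mu a rho k L' = P mu a rho k L) /\
  (forall (L : sfamily S) (Al : S -> Prop), L <> nil ->
     admissible mu (L ++ (Al, 0%nat) :: nil) ->
     infinite_sum (fun r => P mu a rho k (L ++ (Al, r) :: nil)) (P mu a rho k L)).
Proof.
  intros Ha Hrho Hk; split.
  - intros L L' _; apply P_Permutation.
  - intros L Al _ [Hpos _].
    apply P_snoc_infinite_sum; try lra.
    + apply sum_mu_nonneg; intros p Hp; apply Hpos, in_or_app; now left.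
    + apply (Hpos (Al, 0%nat)), in_or_app; right; now left.
Qed.
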